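(* Let $A_{1}\in \mathbb{C}^{m\times n}$, $b_{1}\in \mathbb{C}^{m}$, $A_{2}\in \mathbb{C}^{k\times n}$ with $r(A_{2})=k\geq 1$, and $b_{2}\in \mathbb{C}^{k}$. Let $D_{2}$ be an arbitrary but fixed matrix with $R(D_{2})=N(A_{2})$, and define \[ \Xi =\{D_{2}(A_{1}D_{2})^{\dagger}A_{1}A_{1}^{\dagger}b_{1}+(I-D_{2}(A_{1}D_{2})^{\dagger}A_{1})(A_{2}^{\dagger}b_{2}+z):z\in N(A_{2})\}. \] Assume further that $r(A_{1})=n$. Then \[ D_{2}(A_{1}D_{2})^{\dagger}A_{1}=P_{N(A_{2}),\,(A_{1}^{*}A_{1})^{-1}R(A_{2}^{*})}, \] and $\Xi$ is a singleton, \[ \Xi=\{A_{1}^{\dagger}b_{1}+(A_{1}^{*}A_{1})^{-1}A_{2}^{*}\big(A_2 (A_{1}^{*}A_{1})^{-1}A_{2}^{*}\big)^{-1}(b_{2}-A_{2}A_{1}^{\dagger}b_{1})\}. \]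
   Context: $A^{*}$ is the conjugate transpose, $A^{\dagger}$ the Moore–Penrose inverse, $r(A)$, $R(A)$, $N(A)$ the rank, range and null space of $A$. For complementary subspaces $L,M$ of $\mathbb{C}^n$ (i.e. $L+M=\mathbb{C}^n$, $L\cap M=\{0\}$), $P_{L,M}$ denotes the oblique projector onto $L$ along $M$ (the idempotent matrix with range $L$ and null space $M$). For a matrix $B$ and subspace $S$, $BS=\{Bs:s\in S\}$. (It is known that every solution of $\min_{x}\|A_1x-b_1\|^2$ subject to $A_2x=b_2$ lies in $\Xi$.) *)

From HB Require Import structures.
From mathcomp Require Import all_boot all_order all_algebra all_field.
From Stdlib Require Import ClassicalEpsilon.
Set Implicit Arguments. Unset Strict Implicit. Unset Printing Implicit Defensive.
Import GRing.Theory Num.Theory.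
Local Open Scope ring_scope.

Definition ctr {m n : nat} (A : 'M[algC]_(m, n)) : 'M[algC]_(n, m) :=
  (map_mx (@Num.conj _) A)^T.

Definition is_mpinv {m n : nat} (A : 'M[algC]_(m, n)) (X : 'M[algC]_(n, m)) : Prop :=
  [/\ A *m X *m A = A, X *m A *m X = X,
      ctr (A *m X) = A *m X & ctr (X *m A) = X *m A].

Definition mpinv {m n : nat} (A : 'M[algC]_(m, n)) : 'M[algC]_(n, m) :=
  epsilon (inhabits 0) (is_mpinv A).

Definition range {n p : nat} (A : 'M[algC]_(n, p)) : 'cV[algC]_n -> Prop :=
  fun x => exists y : 'cV[algC]_p, x = A *m y.
Definition nullsp {k n : nat} (A : 'M[algC]_(k, n)) : 'cV[algC]_n -> Prop :=
  fun x => A *m x = 0.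
Definition image_sub {n q : nat} (B : 'M[algC]_(n, q)) (S : 'cV[algC]_q -> Prop)
  : 'cV[algC]_n -> Prop := fun x => exists2 s, S s & x = B *m s.
Definition sub_eq {n : nat} (S T : 'cV[algC]_n -> Prop) : Prop :=
  forall x, S x <-> T x.

Definition is_oblique_proj {n : nat} (P : 'M[algC]_n) (L M : 'cV[algC]_n -> Prop) : Prop :=
  [/\ (forall x, exists l mm, [/\ L l, M mm & x = l + mm]),
      (forall x, L x -> M x -> x = 0),
      P *m P = P,
      sub_eq (range P) L
    & sub_eq (nullsp P) M].

Definition Xi {m n k p : nat} (A1 : 'M[algC]_(m, n)) (b1 : 'cV[algC]_m)
  (A2 : 'M[algC]_(k, n)) (b2 : 'cV[algC]_k) (D2 : 'M[algC]_(n, p))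
  : 'cV[algC]_n -> Prop :=
  fun x => exists2 z, nullsp A2 z &
    x = D2 *m mpinv (A1 *m D2) *m A1 *m mpinv A1 *m b1
        + (1%:M - D2 *m mpinv (A1 *m D2) *m A1) *m (mpinv A2 *m b2 + z).

(* With [A1] of full column rank, [G := (A1^* A1)^-1] exists and the projector
   [P := D2 (A1 D2)^+ A1] fixes [N(A2) = R(D2)] (since [A1] is injective and
   [A1 D2 (A1 D2)^+ A1 D2 = A1 D2]) while it kills [G R(A2^* )] (since
   [(A1 D2)^+ = (A1 D2)^+ ((A1 D2)^+)^* (A1 D2)^*] and [D2^* A2^* = 0]).
   Hence [P = I - K A2] for the right inverse [K := G A2^* (A2 G A2^* )^-1] of
   [A2], and both the oblique projector description and the closed form of
   [Xi] are algebraic consequences of [A2 K = I]. *)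
From mathcomp Require Import all_boot all_order all_algebra all_field.
From Stdlib Require Import ClassicalEpsilon.
Import GRing.Theory Num.Theory.
Set Implicit Arguments. Unset Strict Implicit.
Local Open Scope ring_scope.

Lemma ctrM m n q (A : 'M[algC]_(m, n)) (B : 'M[algC]_(n, q)) :
  ctr (A *m B) = ctr B *m ctr A.
Proof. by rewrite /ctr map_mxM trmx_mul. Qed.

Lemma ctrK m n (A : 'M[algC]_(m, n)) : ctr (ctr A) = A.
Proof. by apply/matrixP=> i j; rewrite /ctr !mxE conjCK. Qed.

Lemma ctr0 m n : ctr (0 : 'M[algC]_(m, n)) = 0.
Proof. by rewrite /ctr map_mx0 trmx0. Qed.

Lemma ctrV n (A : 'M[algC]_n) : ctr (invmx A) = invmx (ctr A).
Proof. by rewrite /ctr map_invmx trmx_inv. Qed.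

Lemma mxrank_ctr m n (A : 'M[algC]_(m, n)) : \rank (ctr A) = \rank A.
Proof. by rewrite /ctr mxrank_tr mxrank_map. Qed.

Lemma ctr_herm_conj m r (F : 'M[algC]_(m, r)) (H : 'M[algC]_r) : ctr H = H ->
  ctr (F *m H *m ctr F) = F *m H *m ctr F.
Proof. by move=> hH; rewrite !ctrM ctrK hH mulmxA. Qed.

Lemma ctr_mul_self_eq0 m (y : 'cV[algC]_m) : ctr y *m y = 0 -> y = 0.
Proof.
move=> /(congr1 (fun M : 'M[algC]_1 => M 0 0)); rewrite !mxE => hsum.
have norm_eq0 i : `|y i 0| ^+ 2 = 0.
  apply: (psumr_eq0P (P := predT) (F := fun i => `|y i 0| ^+ 2)) => //.
    by move=> j _; rewrite exprn_ge0.
  by rewrite -[RHS]hsum; apply: eq_bigr => j _; rewrite normCKC !mxE.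
apply/matrixP=> i j; rewrite (ord1 j) mxE.
by move/eqP: (norm_eq0 i); rewrite expf_eq0 /= normr_eq0 => /eqP.
Qed.

Lemma mulmx_cV_ext m n (A B : 'M[algC]_(m, n)) :
  (forall x : 'cV_n, A *m x = B *m x) -> A = B.
Proof.
move=> hAB; apply/matrixP=> i j.
have := congr1 (fun M : 'M[algC]_(m, 1) => M i 0) (hAB (delta_mx j 0)).
by rewrite -!colE !mxE.
Qed.

Lemma full_col_rank_mulmxI m r q (F : 'M[algC]_(m, r)) (A B : 'M[algC]_(r, q)) :
  \rank F = r -> F *m A = F *m B -> A = B.
Proof.
move=> hr hFAB; have freeF : row_free F^T by rewrite /row_free mxrank_tr hr.
by apply: trmx_inj; apply: (row_free_inj freeF); rewrite -!trmx_mul hFAB.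
Qed.

Lemma full_col_rank_inj m r (F : 'M[algC]_(m, r)) (x : 'cV[algC]_r) :
  \rank F = r -> F *m x = 0 -> x = 0.
Proof. by move=> hr; rewrite -(mulmx0 _ F) => /(full_col_rank_mulmxI hr). Qed.

Lemma inj_unitmx r (H : 'M[algC]_r) :
  (forall x : 'cV_r, H *m x = 0 -> x = 0) -> H \in unitmx.
Proof.
move=> injH; rewrite -unitmx_tr -row_free_unit; apply/inj_row_free => v hv.
by apply: trmx_inj; rewrite trmx0; apply: injH; rewrite -[H]trmxK -trmx_mul hv trmx0.
Qed.

Lemma gram_unitmx m r (F : 'M[algC]_(m, r)) :
  (forall x : 'cV_r, F *m x = 0 -> x = 0) -> ctr F *m F \in unitmx.
Proof.
move=> injF; apply: inj_unitmx => x hx; apply/injF/ctr_mul_self_eq0.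
by rewrite ctrM -mulmxA (mulmxA (ctr F)) hx mulmx0.
Qed.

Lemma full_col_rank_gram_unitmx m r (F : 'M[algC]_(m, r)) :
  \rank F = r -> ctr F *m F \in unitmx.
Proof. by move=> hr; apply: gram_unitmx => x; apply: full_col_rank_inj. Qed.

Lemma full_rank_factor_is_mpinv m r n (F : 'M[algC]_(m, r)) (G : 'M[algC]_(r, n)) :
  \rank F = r -> \rank G = r ->
  let HF := ctr F *m F in let HG := G *m ctr G in
  is_mpinv (F *m G) (ctr G *m invmx HG *m invmx HF *m ctr F).
Proof.
move=> rF rG HF HG.
have uF : HF \in unitmx by exact: full_col_rank_gram_unitmx.
have uG : HG \in unitmx.
  by have := @full_col_rank_gram_unitmx _ _ (ctr G); rewrite ctrK mxrank_ctr; apply.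
have hermF : ctr (invmx HF) = invmx HF by rewrite ctrV /HF ctrM ctrK.
have hermG : ctr (invmx HG) = invmx HG by rewrite ctrV /HG ctrM ctrK.
have MX : F *m G *m (ctr G *m invmx HG *m invmx HF *m ctr F) = F *m invmx HF *m ctr F.
  by rewrite !mulmxA -(mulmxA F G) -/HG -(mulmxA F HG) mulmxV // mulmx1.
have XM : ctr G *m invmx HG *m invmx HF *m ctr F *m (F *m G) = ctr G *m invmx HG *m G.
  by rewrite !mulmxA -(mulmxA _ (ctr F) F) -/HF -(mulmxA _ (invmx HF) HF)
    mulVmx // mulmx1.
split.
- by rewrite MX !mulmxA -(mulmxA _ (ctr F) F) -/HF -(mulmxA _ (invmx HF) HF)
    mulVmx // mulmx1.
- by rewrite XM !mulmxA -(mulmxA _ G (ctr G)) -/HG -(mulmxA _ (invmx HG) HG)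
    mulVmx // mulmx1.
- by rewrite MX ctr_herm_conj.
- by rewrite XM; have := ctr_herm_conj (ctr G) hermG; rewrite ctrK.
Qed.

Lemma mpinv_exists m n (M : 'M[algC]_(m, n)) : exists X, is_mpinv M X.
Proof.
rewrite -{1}(mulmx_base M).
by eexists; apply: full_rank_factor_is_mpinv; apply/eqP;
  [exact: col_base_full | exact: row_base_free].
Qed.

Lemma mpinvP m n (M : 'M[algC]_(m, n)) : is_mpinv M (mpinv M).
Proof.
have [X hX] := mpinv_exists M.
exact: (epsilon_spec (inhabits 0) (is_mpinv M) (ex_intro _ X hX)).
Qed.

Lemma mpinv_ctr_factor m n (M : 'M[algC]_(m, n)) :
  mpinv M = mpinv M *m ctr (mpinv M) *m ctr M.
Proof.
have [_ XMX MX_herm _] := mpinvP M.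
by rewrite -mulmxA -ctrM MX_herm mulmxA XMX.
Qed.

Lemma full_row_rank_mulmx_mpinv k n (B : 'M[algC]_(k, n)) :
  \rank B = k -> B *m mpinv B = 1%:M.
Proof.
move=> rB; have [BXB _ _ _] := mpinvP B.
have freeB : row_free B by rewrite /row_free rB.
by apply: (row_free_inj freeB); rewrite /= BXB mul1mx.
Qed.

Lemma oblique_proj_sub_right_inverse k n (B : 'M[algC]_(k, n)) (K : 'M[algC]_(n, k))
    (M : 'cV[algC]_n -> Prop) :
  B *m K = 1%:M -> sub_eq (range K) M ->
  is_oblique_proj (1%:M - K *m B) (nullsp B) M.
Proof.
move=> BK hM.
have B_proj x : B *m ((1%:M - K *m B) *m x) = 0.
  by rewrite mulmxA mulmxBr mulmxA BK mul1mx mulmx1 subrr mul0mx.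
have proj_fix x : nullsp B x -> (1%:M - K *m B) *m x = x.
  by rewrite /nullsp mulmxBl mul1mx -mulmxA => ->; rewrite mulmx0 subr0.
split.
- move=> x; exists ((1%:M - K *m B) *m x), (K *m (B *m x)); split=> //.
    by apply/hM; exists (B *m x).
  by rewrite mulmxBl mul1mx mulmxA subrK.
- move=> x Bx /hM [y xE]; move: Bx; rewrite /nullsp xE mulmxA BK mul1mx => ->.
  by rewrite mulmx0.
- by apply: mulmx_cV_ext => x; rewrite -mulmxA proj_fix //; apply: B_proj.
- by move=> x; split=> [[y ->]|/proj_fix xE]; [apply: B_proj | exists x].
- move=> x; split=> [|/hM [y ->]].
    rewrite /nullsp mulmxBl mul1mx => /eqP; rewrite subr_eq0 => /eqP xE.
    by apply/hM; exists (B *m x); rewrite {1}xE mulmxA.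
  by rewrite /nullsp mulmxBl mul1mx mulmxA -(mulmxA K) BK mulmx1 subrr.
Qed.

Lemma affine_solution_right_inverse k n (B : 'M[algC]_(k, n)) (K : 'M[algC]_(n, k))
    (R : 'M[algC]_(n, k)) (x0 z : 'cV[algC]_n) (b : 'cV[algC]_k) :
  B *m R = 1%:M -> B *m z = 0 ->
  (1%:M - K *m B) *m x0 + K *m B *m (R *m b + z) = x0 + K *m (b - B *m x0).
Proof.
move=> BR Bz; rewrite -(mulmxA K) mulmxDr Bz addr0 (mulmxA B R) BR mul1mx.
by rewrite mulmxBl mul1mx mulmxBr mulmxA addrAC addrA.
Qed.

Section ConstrainedLeastSquares.

Variables (m n k p : nat) (A1 : 'M[algC]_(m, n)) (A2 : 'M[algC]_(k, n)).
Variable D2 : 'M[algC]_(n, p).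
Hypotheses (rankA1 : \rank A1 = n) (rankA2 : \rank A2 = k).
Hypothesis rangeD2 : sub_eq (range D2) (nullsp A2).

Let G := invmx (ctr A1 *m A1).
Let S := A2 *m G *m ctr A2.
Let K := G *m ctr A2 *m invmx S.
Let P := D2 *m mpinv (A1 *m D2) *m A1.

Lemma ctr_gram_inv : ctr G = G.
Proof. by rewrite /G ctrV ctrM ctrK. Qed.

(* [S] is the Gram matrix of the injective map [A1 G A2^*]. *)
Lemma weighted_gram_unitmx : S \in unitmx.
Proof.
have uU := full_col_rank_gram_unitmx rankA1.
have -> : S = ctr (A1 *m G *m ctr A2) *m (A1 *m G *m ctr A2).
  by rewrite !ctrM ctrK ctr_gram_inv /S !mulmxA -(mulmxA _ (ctr A1) A1) /G mulmxK.
apply: gram_unitmx => x; rewrite -!mulmxA => /(full_col_rank_inj rankA1).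
move=> /(congr1 (mulmx (ctr A1 *m A1))).
rewrite /G mulKVmx // mulmx0 => /full_col_rank_inj; apply.
by rewrite mxrank_ctr.
Qed.

Lemma mulmx_A2_K : A2 *m K = 1%:M.
Proof. by rewrite /K !mulmxA -/S mulmxV //; apply: weighted_gram_unitmx. Qed.

Lemma range_K : sub_eq (range K) (image_sub G (range (ctr A2))).
Proof.
move=> x; split=> [[y ->]|[s [y ->] ->]].
  by exists (ctr A2 *m (invmx S *m y)); [exists (invmx S *m y) | rewrite !mulmxA].
exists (S *m y); rewrite /K -(mulmxA _ (invmx S)) mulKmx ?mulmxA //.
exact: weighted_gram_unitmx.
Qed.

Lemma mulmx_A2_D2 : A2 *m D2 = 0.
Proof.
apply: mulmx_cV_ext => y; rewrite -mulmxA mul0mx.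
by apply/rangeD2; exists y.
Qed.

Lemma proj_fix_D2 : P *m D2 = D2.
Proof.
have [MXM _ _ _] := mpinvP (A1 *m D2).
by apply: (full_col_rank_mulmxI rankA1); rewrite /P !mulmxA -(mulmxA _ A1 D2) MXM.
Qed.

Lemma proj_gram_ctrA2 : P *m G *m ctr A2 = 0.
Proof.
rewrite /P mpinv_ctr_factor ctrM !mulmxA -(mulmxA _ (ctr A1) A1).
rewrite /G mulmxK; last exact: full_col_rank_gram_unitmx.
by rewrite -(mulmxA _ (ctr D2)) -ctrM mulmx_A2_D2 ctr0 mulmx0.
Qed.

Lemma proj_eq : P = 1%:M - K *m A2.
Proof.
apply: mulmx_cV_ext => x.
have [y xE] : exists y, (1%:M - K *m A2) *m x = D2 *m y.
  apply/rangeD2; rewrite /nullsp mulmxA mulmxBr mulmxA mulmx_A2_K.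
  by rewrite mul1mx mulmx1 subrr mul0mx.
have {1}-> : x = (1%:M - K *m A2) *m x + G *m (ctr A2 *m (invmx S *m (A2 *m x))).
  by rewrite mulmxBl mul1mx /K !mulmxA subrK.
rewrite mulmxDr (mulmxA P G) (mulmxA (P *m G)) proj_gram_ctrA2 mul0mx addr0.
by rewrite xE mulmxA proj_fix_D2.
Qed.

End ConstrainedLeastSquares.

Theorem corollary3 (m n k p : nat) (A1 : 'M[algC]_(m, n)) (b1 : 'cV[algC]_m)
  (A2 : 'M[algC]_(k, n)) (b2 : 'cV[algC]_k) (D2 : 'M[algC]_(n, p)) :
  \rank A2 = k -> (0 < k)%N ->
  sub_eq (range D2) (nullsp A2) ->
  \rank A1 = n ->
  is_oblique_proj (D2 *m mpinv (A1 *m D2) *m A1)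
    (nullsp A2) (image_sub (invmx (ctr A1 *m A1)) (range (ctr A2)))
  /\
  (forall x, Xi A1 b1 A2 b2 D2 x <->
     x = mpinv A1 *m b1
         + invmx (ctr A1 *m A1) *m ctr A2
           *m invmx (A2 *m invmx (ctr A1 *m A1) *m ctr A2)
           *m (b2 - A2 *m mpinv A1 *m b1)).
Proof.
move=> rankA2 _ rangeD2 rankA1.
have PE := proj_eq rankA1 rankA2 rangeD2.
have A2K := mulmx_A2_K rankA1 rankA2.
have A2R := full_row_rank_mulmx_mpinv rankA2.
split.
  by rewrite PE; apply: oblique_proj_sub_right_inverse => //; apply: range_K.
have IP : 1%:M - D2 *m mpinv (A1 *m D2) *m A1
          = invmx (ctr A1 *m A1) *m ctr A2
            *m invmx (A2 *m invmx (ctr A1 *m A1) *m ctr A2) *m A2.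
  by rewrite PE opprB addrC subrK.
move=> x; rewrite /Xi IP -mulmxA PE -(mulmxA A2 (mpinv A1)).
split=> [[z Az ->]|->]; first exact: affine_solution_right_inverse.
exists 0; first by rewrite /nullsp mulmx0.
by rewrite affine_solution_right_inverse ?mulmx0.
Qed.
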